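(* Let $X$ be a separable metric space, $g$ a Hausdorff function and $E\subseteq X$. Then $\underline{\mathcal P}^g_0(E)=0$ if and only if $\underline{\mathcal B}^g_0(E)=0$.
   Context: In a metric space $(X,d)$: $\operatorname{gap}F=\inf\{d(x,y):x,y\in F,x\neq y\}$, $C_\delta(E)=\sup\{|F|:F\subseteq E,\operatorname{gap}F>\delta\}$. A Hausdorff function is a nondecreasing $g:(0,\infty)\to(0,\infty)$. A scale is a set $\Delta\subseteq(0,\infty)$ with $0$ in its closure. A packing is a family $\pi=\{(x_i,r_i):i\in I\}\subseteq X\times(0,\infty)$ with $d(x_i,x_j)>r_i$ for all $i\ne j$; it is a packing of $E$ if all $x_i\in E$, $\Delta$-valued if all $r_i\in\Delta$, $\delta$-fine if all $r_i\le\delta$; $g(\pi)=\sum_ig(r_i)$. $\mathcal P^g_{\Delta,0}(E)=\inf_{\delta>0}\sup\{g(\pi):\pi$ a $\Delta$-valued $\delta$-fine packing of $E\}$; $\underline{\mathcal P}^g_0(E)=\inf_\Delta\mathcal P^g_{\Delta,0}(E)$ (infimum over all scales); $\underline{\mathcal B}^g_0(E)=\liminf_{\delta\to0}C_\delta(E)g(\delta)$. *)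

From HB Require Import structures.
From mathcomp Require Import all_boot all_order all_algebra.
From mathcomp Require Import all_classical all_reals.
From mathcomp Require Import ereal esum.
Set Implicit Arguments. Unset Strict Implicit. Unset Printing Implicit Defensive.
Import Order.TTheory GRing.Theory Num.Theory.
Local Open Scope classical_set_scope.
Local Open Scope ring_scope.
Local Open Scope ereal_scope.

Section Defs.
Variables (R : realType) (X : choiceType) (d : X -> X -> R).

Definition is_metric : Prop :=
  [/\ forall x y, (0 <= d x y)%R,
      forall x y, d x y = 0%R <-> x = y,
      forall x y, d x y = d y x &
      forall x y z, (d x z <= d x y + d y z)%R].

Definition separable : Prop :=
  exists S : set X, countable S /\
    forall x (e : R), (0 < e)%R -> exists2 s, S s & (d x s < e)%R.

Definition hausdorff_function (g : R -> R) : Prop :=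
  (forall r, (0 < r)%R -> (0 < g r)%R) /\
  (forall r s, (0 < r)%R -> (r <= s)%R -> (g r <= g s)%R).

(* gap F = inf { d x y : x, y in F, x <> y }  (inf of empty set = +oo) *)
Definition gap (F : set X) : \bar R :=
  ereal_inf [set (d p.1 p.2)%:E | p in [set p : X * X | [/\ F p.1, F p.2 & p.1 <> p.2]]].

(* C_delta(E) = sup { |F| : F subset E, gap F > delta }, with |F| = +oo for
   infinite F *)
Definition Cdelta (delta : R) (E : set X) : \bar R :=
  ereal_sup ([set (n%:R)%:E | n in [set n : nat |
                exists F, [/\ F `<=` E, (F #= `I_n)%card & delta%:E < gap F]]]
             `|` [set x | x = +oo /\
                exists F, [/\ F `<=` E, infinite_set F & delta%:E < gap F]]).

Definition scale (Delta : set R) : Prop :=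
  (forall r, Delta r -> (0 < r)%R) /\
  (forall e : R, (0 < e)%R -> exists2 r, Delta r & (r < e)%R).

(* a packing, represented as a set of (center, radius) pairs *)
Definition packing (P : set (X * R)) : Prop :=
  (forall p, P p -> (0 < p.2)%R) /\
  (forall p q, P p -> P q -> p <> q -> (p.2 < d p.1 q.1)%R).

Definition packing_of (E : set X) (Delta : set R) (delta : R)
    (P : set (X * R)) : Prop :=
  [/\ packing P, forall p, P p -> E p.1, forall p, P p -> Delta p.2 &
      forall p, P p -> (p.2 <= delta)%R].

Definition gpack (g : R -> R) (P : set (X * R)) : \bar R :=
  \esum_(p in P) (g p.2)%:E.

Definition packing_premeasure (g : R -> R) (Delta : set R) (E : set X)
    : \bar R :=
  ereal_inf [set ereal_sup [set gpack g P | P in packing_of E Delta delta]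
            | delta in [set delta : R | (0 < delta)%R]].

Definition lower_packing (g : R -> R) (E : set X) : \bar R :=
  ereal_inf [set packing_premeasure g Delta E | Delta in scale].

Definition liminf0 (f : R -> \bar R) : \bar R :=
  ereal_sup [set ereal_inf [set f delta | delta in
                 [set delta : R | (0 < delta)%R /\ (delta < eps)%R]]
            | eps in [set eps : R | (0 < eps)%R]].

Definition lower_box (g : R -> R) (E : set X) : \bar R :=
  liminf0 (fun delta => Cdelta delta E * (g delta)%:E).

End Defs.

From HB Require Import structures.
From mathcomp Require Import all_boot all_order all_algebra.
From mathcomp Require Import all_classical all_reals.
From mathcomp Require Import ereal esum sequences finmap.
Set Implicit Arguments. Unset Strict Implicit. Unset Printing Implicit Defensive.
Import Order.TTheory GRing.Theory Num.Theory.
Local Open Scope classical_set_scope.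
Local Open Scope ring_scope.

(* Each packing is the disjoint union of its levels {(x, r) in P}, r fixed; the
   centres of a level form a subset of E whose gap exceeds r, so a level
   contributes at most C_r(E) g(r).  If the lower box content vanishes we can
   choose radii r_n decreasing to 0 with C_{r_n}(E) g(r_n) < e / 2^(n+1); for the
   scale {r_n} every packing then has g-sum at most e.  Conversely, a finite set
   of gap > r with all radii r is itself a packing, so C_r(E) g(r) is bounded by
   the packing sums at every radius r of a scale: the lower box content never
   exceeds the lower packing content. *)

Lemma exists_decreasing_seq_to0 (R : realType) (Q : nat -> R -> Prop) :
  (forall n a, 0 < a -> exists2 r, 0 < r < a & Q n r) ->
  exists u : nat -> R, [/\ forall n, 0 < u n, forall n, u n < n.+1%:R^-1,
    forall n, u n.+1 < u n & forall n, Q n (u n)].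
Proof.
move=> HQ.
have /choice[f Hf] : forall na : nat * R,
    exists r, 0 < na.2 -> 0 < r < na.2 /\ Q na.1 r.
  move=> [n a]; have [a0|a_le0] := boolP (0 < a).
    by have [r ra Qr] := HQ n a a0; exists r.
  by exists 0; rewrite (negbTE a_le0).
pose u := fix u n :=
  if n is m.+1 then f (n, Num.min (u m) n.+1%:R^-1) else f (0%N, 1).
have u_next n : 0 < u n ->
    [/\ 0 < u n.+1, u n.+1 < u n, u n.+1 < n.+2%:R^-1 & Q n.+1 (u n.+1)].
  move=> un0; have [] := Hf (n.+1, Num.min (u n) n.+2%:R^-1).
    by rewrite /= lt_min un0 invr_gt0 ltr0n.
  by rewrite /= lt_min => /andP[-> /andP[-> ->]].
have [u0_gt0 u0_lt1 Qu0] : [/\ 0 < u 0, u 0 < 1 & Q 0%N (u 0)].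
  by have [] := Hf (0%N, 1) ltr01 => /andP[-> ->].
have u_gt0 n : 0 < u n by elim: n => [|n /u_next[]].
exists u; split => [//|[|n]|n|[|n]]; rewrite ?invr1 //;
  by have [] := u_next n (u_gt0 n).
Qed.

Lemma scale_range (R : realType) (u : nat -> R) :
  (forall n, 0 < u n) -> (forall n, u n < n.+1%:R^-1) -> scale (range u).
Proof.
move=> u_gt0 u_small; split=> [_ [n _ <-] //|e e0].
exists (u (Num.truncn e^-1)); first by exists (Num.truncn e^-1).
apply: lt_trans (u_small _) _.
by rewrite invf_plt ?posrE ?ltr0n //; exact: truncnS_gt.
Qed.

Local Open Scope ereal_scope.

Lemma sumEFin_const (R : realType) (I : Type) (s : seq I) (c : R) :
  \sum_(i <- s) c%:E = (c *+ size s)%:E.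
Proof. by rewrite sumEFin big_const_seq count_predT iter_addr_0. Qed.

Section LowerContents.
Variables (R : realType) (X : choiceType) (d : X -> X -> R) (g : R -> R).

Lemma gap_le_dist (F : set X) x y : F x -> F y -> x <> y -> gap d F <= (d x y)%:E.
Proof. by move=> Fx Fy xy; apply: ereal_inf_lbound; exists (x, y). Qed.

Lemma le_gap {A B : set X} : A `<=` B -> gap d B <= gap d A.
Proof.
move=> AB; apply: ereal_inf_le_tmp => _ [p [Ap1 Ap2 p12] <-].
by exists p => //; split; [exact: AB|exact: AB|].
Qed.

Lemma lt_gap_fset (B : {fset X}) r :
  (forall x y, x \in B -> y \in B -> x != y -> (r < d x y)%R) ->
  r%:E < gap d [set` B].
Proof.
move=> Bd; pose pairs := [seq (x, y) | x <- B, y <- B].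
pose m := \big[Order.min/+oo]_(p <- pairs | p.1 != p.2) (d p.1 p.2)%:E.
apply: (@lt_le_trans _ _ m).
  rewrite /m big_seq_cond; apply: lt_bigmin => [|[x y]]; first exact: ltry.
  by move=> /andP[/allpairsP[[x' y'] [/= xB yB [-> ->]]] xy]; rewrite lte_fin Bd.
apply/ereal_infP => _ [[x y] [/= xB yB xy] <-].
apply: (@ge_bigmin_seq _ _ _ _ _ (x, y)); last exact/eqP.
by apply/allpairsP; exists (x, y).
Qed.

Lemma Cdelta_ge_card (E : set X) (B : {fset X}) r : [set` B] `<=` E ->
  r%:E < gap d [set` B] -> (#|`B|%:R)%:E <= Cdelta d r E.
Proof.
move=> BE rB; apply: ereal_sup_ubound; left; exists #|`B| => //.
exists [set` B]; split => //; apply/fcard_eq; first exact: finite_fset.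
  by apply/finite_setP; exists #|`B|.
by rewrite set_fsetK (card_fset_set (card_eqxx _)).
Qed.

Lemma Cdelta_ge0 (E : set X) r : 0 <= Cdelta d r E.
Proof.
have := @Cdelta_ge_card E fset0 r; rewrite cardfs0; apply => //.
exact: lt_gap_fset.
Qed.

Lemma Cdelta_le (E : set X) r (c : R) :
  (forall B : {fset X}, [set` B] `<=` E -> r%:E < gap d [set` B] ->
     (#|`B|%:R <= c)%R) -> Cdelta d r E <= c%:E.
Proof.
move=> Bc; apply: ge_ereal_sup => _ [[n [F [FE Fn rF]] <-]|[-> [F [FE Finf rF]]]].
  have finF : finite_set F by apply/finite_setP; exists n.
  by have := Bc (fset_set F); rewrite fset_setK // (card_fset_set Fn) lee_fin; apply.
exfalso; have [B BF Bsize] := infinite_set_fset (Num.truncn c).+1 Finf.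
have := Bc B (subset_trans BF FE) (lt_le_trans rF (le_gap BF)).
apply/negP; rewrite -ltNge; apply: lt_le_trans (truncnS_gt c) _.
by rewrite ler_nat.
Qed.

Definition const_radius (B : {fset X}) (r : R) : set (X * R) :=
  [set` [fset (x, r) | x in B]%fset].

Lemma const_radius_packing_of (E : set X) (Delta : set R) delta
    (B : {fset X}) r :
  [set` B] `<=` E -> r%:E < gap d [set` B] -> (0 < r)%R -> Delta r ->
  (r <= delta)%R -> packing_of d E Delta delta (const_radius B r).
Proof.
move=> BE rB r0 Dr rdelta; split; try by move=> _ /imfsetP[x xB ->] //; exact: BE.
split=> [_ /imfsetP[x _ ->] //|_ _ /imfsetP[x xB ->] /imfsetP[y yB ->] /= xy].
rewrite -lte_fin (lt_le_trans rB) // gap_le_dist //.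
by move=> exy; apply: xy; rewrite exy.
Qed.

Lemma gpack_const_radius (B : {fset X}) r : (0 <= g r)%R ->
  gpack g (const_radius B r) = (g r *+ #|`B|)%:E.
Proof.
move=> gr0; rewrite /gpack /const_radius esum_fset; first last.
- by move=> _ /set_mem /imfsetP[x _ ->]; rewrite lee_fin.
- exact: finite_fset.
rewrite fsbig_finite ?finite_fset // set_fsetK big_imfset /=.
  by rewrite sumEFin_const cardfE.
by move=> x y _ _ [].
Qed.

Lemma esum_level_le_Cdelta (E : set X) (P : set (X * R)) r :
  packing d P -> (forall p, P p -> E p.1) -> (0 <= g r)%R ->
  \esum_(p in [set p | P p /\ p.2 = r]) (g p.2)%:E <= Cdelta d r E * (g r)%:E.
Proof.
move=> [_ Pd] PE gr0; apply: ge_ereal_sup => _ [A [finA AP] <-].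
have Alevel p : p \in fset_set A -> P p /\ p.2 = r.
  by rewrite in_fset_set // => /set_mem /AP.
rewrite fsbig_finite // (eq_big_seq (fun=> (g r)%:E)); last first.
  by move=> p /Alevel[_ ->].
pose B := [fset p.1 | p in fset_set A]%fset.
have cardB : #|`B| = size (fset_set A).
  rewrite card_in_imfset ?cardfE // => -[x a] [y b].
  by move=> /Alevel[_ /= ->] /Alevel[_ /= ->] /= ->.
rewrite sumEFin_const -cardB -mulr_natl EFinM lee_wpmul2r ?lee_fin //.
apply: Cdelta_ge_card => [x /imfsetP[p /Alevel[Pp _] ->]|]; first exact: PE.
apply: lt_gap_fset => x y /imfsetP[p /Alevel[Pp <-] ->] /imfsetP[q /Alevel[Pq _] ->].
by move=> pq; apply: Pd => // epq; move: pq; rewrite epq eqxx.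
Qed.

Lemma Cdelta_mul_le_packing_sup (E : set X) (Delta : set R) delta r :
  Delta r -> (0 < r)%R -> (r <= delta)%R -> (0 < g r)%R ->
  Cdelta d r E * (g r)%:E <=
    ereal_sup [set gpack g P | P in packing_of d E Delta delta].
Proof.
move=> Dr r0 rdelta gr0.
have gpack_le P : packing_of d E Delta delta P ->
    gpack g P <= ereal_sup [set gpack g P | P in packing_of d E Delta delta].
  by move=> PP; apply: ereal_sup_ubound; exists P.
have pack_fset B : [set` B] `<=` E -> r%:E < gap d [set` B] ->
    packing_of d E Delta delta (const_radius B r).
  by move=> BE rB; apply: const_radius_packing_of.
have : (g r *+ #|`fset0 : {fset X}|)%:E <=
    ereal_sup [set gpack g P | P in packing_of d E Delta delta].
  rewrite -(gpack_const_radius _ (ltW gr0)).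
  by apply: gpack_le; apply: pack_fset => [x|]; [rewrite /= inE|apply: lt_gap_fset].
rewrite cardfs0 mulr0n.
case: ereal_sup gpack_le => [s gpack_le _|_ _|_]; [|exact: leey|by rewrite leeNy_eq].
rewrite -lee_pdivlMr // -EFinM; apply: Cdelta_le => B BE rB.
have := gpack_le _ (pack_fset B BE rB).
by rewrite (gpack_const_radius _ (ltW gr0)) lee_fin ler_pdivlMr // mulr_natl.
Qed.

Lemma gpack_le_Cdelta_series (E : set X) (u : nat -> R) delta P :
  injective u -> (forall n, (0 < u n)%R) ->
  (forall r, (0 < r)%R -> (0 <= g r)%R) ->
  packing_of d E (range u) delta P ->
  gpack g P <= \sum_(0 <= n <oo) Cdelta d (u n) E * (g (u n))%:E.
Proof.
move=> u_inj u_gt0 g_ge0 [[P_gt0 Pd] PE Pu _].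
(* [esum_bigcupT] needs a summand that is nonnegative everywhere, not only on P. *)
pose g0 (p : X * R) := (Num.max (g p.2) 0%R)%:E.
have g0_ge0 p : 0 <= g0 p by rewrite lee_fin le_max lexx orbT.
have g0E p : P p -> g0 p = (g p.2)%:E by move=> Pp; rewrite /g0 max_l ?g_ge0 ?P_gt0.
have -> : P = \bigcup_(n in setT) [set p | P p /\ p.2 = u n].
  apply/seteqP; split => [p Pp|p [n _ []] //].
  by have [n _ pn] := Pu p Pp; exists n.
rewrite /gpack (eq_esum (b := g0)) => [|p [n _ [Pp _]]]; last by rewrite g0E.
have levels_disj : trivIset setT (fun n => [set p | P p /\ p.2 = u n]).
  by move=> i j _ _ [p [[_ pi] [_ pj]]]; apply: u_inj; rewrite -pi -pj.
rewrite esum_bigcupT //.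
rewrite -nneseries_esumT => [|n]; last exact: esum_ge0.
apply: lee_nneseries => [n _ _|n _]; first exact: esum_ge0.
rewrite (eq_esum (b := fun p => (g p.2)%:E)) => [|p [Pp _]]; last exact: g0E.
by apply: esum_level_le_Cdelta => //; rewrite ?g_ge0.
Qed.

Lemma lower_box_le_lower_packing (E : set X) :
  (forall r, (0 < r)%R -> (0 < g r)%R) -> lower_box d g E <= lower_packing d g E.
Proof.
move=> g_gt0; apply: ge_ereal_sup => _ [eps eps0 <-].
apply/ereal_infP => _ [Delta [Delta_gt0 Delta_small] <-].
apply/ereal_infP => _ [delta delta0 <-].
have [r Dr] : exists2 r, Delta r & (r < Num.min eps delta)%R.
  by apply: Delta_small; rewrite lt_min eps0 delta0.
rewrite lt_min => /andP[reps rdelta]; have r0 := Delta_gt0 r Dr.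
apply: le_trans _ (Cdelta_mul_le_packing_sup E Dr r0 (ltW rdelta) (g_gt0 r r0)).
by apply: ereal_inf_lbound; exists r.
Qed.

Lemma lower_box_ge0 (E : set X) :
  (forall r, (0 < r)%R -> (0 <= g r)%R) -> 0 <= lower_box d g E.
Proof.
move=> g_ge0; apply: le_trans (ereal_sup_ubound _) => /=; last by exists 1%R.
apply/ereal_infP => _ [r [r0 _] <-].
by rewrite mule_ge0 ?Cdelta_ge0 ?lee_fin ?g_ge0.
Qed.

Lemma lower_packing_ge0 (E : set X) : 0 <= lower_packing d g E.
Proof.
apply/ereal_infP => _ [Delta _ <-]; apply/ereal_infP => _ [delta _ <-].
apply: le_trans (ereal_sup_ubound _); last by exists set0.
by rewrite /gpack esum_set0.
Qed.

Lemma lower_packing_le0 (E : set X) : (forall r, (0 < r)%R -> (0 < g r)%R) ->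
  lower_box d g E = 0 -> lower_packing d g E <= 0.
Proof.
move=> g_gt0 box0; apply/lee_addgt0Pr => e e0; rewrite add0e.
have small_level n a : (0 < a)%R -> exists2 r, (0 < r < a)%R &
    Cdelta d r E * (g r)%:E < (e / (2 ^ n.+1)%:R)%:E.
  move=> a0; have : ereal_inf [set Cdelta d r E * (g r)%:E
      | r in [set r | (0 < r)%R /\ (r < a)%R]] < (e / (2 ^ n.+1)%:R)%:E.
    apply: le_lt_trans (_ : _ <= lower_box d g E) _.
      by apply: ereal_sup_ubound; exists a.
    by rewrite box0 lte_fin divr_gt0 // ltr0n expn_gt0.
  by move=> /ereal_inf_lt[_ [r [r0 ra] <-] ?]; exists r; rewrite ?r0 ?ra.
have [u [u_gt0 u_small u_decr u_level]] := exists_decreasing_seq_to0 small_level.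
have u_inj : injective u by apply/dec_inj/Order.NatMonotonyTheory.decnP.
apply: le_trans (ereal_inf_lbound _) _.
  by exists (range u) => //; exact: scale_range u_gt0 u_small.
apply: le_trans (ereal_inf_lbound _) _; first by exists 1%R => /=.
apply: ge_ereal_sup => _ [P PP <-].
apply: le_trans (gpack_le_Cdelta_series u_inj u_gt0 _ PP) _.
  by move=> r /g_gt0/ltW.
apply: le_trans (epsilon_trick0 xpredT (ltW e0)).
apply: lee_nneseries => [n _ _|n _]; last exact/ltW/u_level.
by rewrite mule_ge0 ?Cdelta_ge0 ?lee_fin ?ltW ?g_gt0.
Qed.

End LowerContents.

Theorem proposition2p11 (R : realType) (X : choiceType) (d : X -> X -> R)
    (g : R -> R) (E : set X) :
  is_metric d -> separable d -> hausdorff_function g ->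
  (lower_packing d g E = 0 <-> lower_box d g E = 0).
Proof.
move=> _ _ [g_gt0 _]; have g_ge0 r : (0 < r)%R -> (0 <= g r)%R by move/g_gt0/ltW.
split => [pack0|box0]; apply/eqP; rewrite eq_le.
  by rewrite lower_box_ge0 // -pack0 lower_box_le_lower_packing.
by rewrite lower_packing_le0 // lower_packing_ge0.
Qed.
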